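(* Let $\alpha: I\to M$ be a unit-speed curve on an oriented surface $M\subset E^3$ with Darboux frame $\{T,V,U\}$ and curvatures $k_g,k_n,\tau_g$, with $k_n(s)\neq 0$ for all $s\in I$. Let $c_2$ be a nonzero real constant, let $\chi$ be an antiderivative of $k_g\tau_g/k_n$ on $I$, and let $$\gamma(s)=\alpha(s)-c_2e^{\chi(s)}\Big(\frac{\tau_g(s)}{k_n(s)}T(s)-V(s)\Big),$$ and assume $\gamma$ is regular. Then $\gamma$ is a general helix if and only if $\alpha$ is a helical curve on $M$.
   Context: $M$ is an oriented surface in Euclidean 3-space $E^3$ and $\alpha:I\to M$ is a unit-speed curve with arc-length parameter $s$. Its Darboux frame $\{T,V,U\}$ consists of the unit tangent $T=\alpha'$, the unit surface normal $U$ of $M$ along $\alpha$, and $V=U\times T$; it satisfies $T'=k_gV+k_nU$, $V'=-k_gT+\tau_gU$, $U'=-k_nT-\tau_gV$, where $k_g,k_n,\tau_g$ are the geodesic curvature, normal curvature and geodesic torsion. A regular curve is a general helix if its unit tangent makes a constant angle with a fixed direction. $\alpha$ is a helical curve on $M$ if $\langle T,d\rangle$ is constant for some fixed unit vector $d$. *)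

From Stdlib Require Import Reals.
From Coquelicot Require Import Coquelicot.
Open Scope R_scope.

Definition vec : Type := (R * R * R)%type.
Definition vx (v : vec) : R := fst (fst v).
Definition vy (v : vec) : R := snd (fst v).
Definition vz (v : vec) : R := snd v.
Definition vzero : vec := (0, 0, 0).
Definition vadd (u v : vec) : vec := (vx u + vx v, vy u + vy v, vz u + vz v).
Definition vscal (r : R) (v : vec) : vec := (r * vx v, r * vy v, r * vz v).
Definition vsub (u v : vec) : vec := vadd u (vscal (-1) v).
Definition dot (u v : vec) : R := vx u * vx v + vy u * vy v + vz u * vz v.
Definition cross (u v : vec) : vec :=
  (vy u * vz v - vz u * vy v, vz u * vx v - vx u * vz v, vx u * vy v - vy u * vx v).
Definition vnorm (v : vec) : R := sqrt (dot v v).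

Definition vderiv (f : R -> vec) (s : R) (v : vec) : Prop :=
  is_derive (fun t => vx (f t)) s (vx v) /\
  is_derive (fun t => vy (f t)) s (vy v) /\
  is_derive (fun t => vz (f t)) s (vz v).
Definition vDerive (f : R -> vec) (s : R) : vec :=
  (Derive (fun t => vx (f t)) s, Derive (fun t => vy (f t)) s, Derive (fun t => vz (f t)) s).

Definition in_I (a b : Rbar) (s : R) : Prop := Rbar_lt a s /\ Rbar_lt s b.

Definition C1_on (a b : Rbar) (f : R -> R) : Prop :=
  forall s, in_I a b s -> ex_derive f s /\ continuous (Derive f) s.

(* {T,V,U} is the Darboux frame of the unit-speed curve alpha (arc length s),
   U being the unit surface normal along alpha, with geodesic curvature kg,
   normal curvature kn and geodesic torsion tg. *)
Definition darboux_frame (a b : Rbar) (alpha T V U : R -> vec) (kg kn tg : R -> R) : Prop :=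
  forall s, in_I a b s ->
    vderiv alpha s (T s) /\
    dot (T s) (T s) = 1 /\ dot (U s) (U s) = 1 /\ dot (T s) (U s) = 0 /\
    V s = cross (U s) (T s) /\
    vderiv T s (vadd (vscal (kg s) (V s)) (vscal (kn s) (U s))) /\
    vderiv V s (vadd (vscal (- kg s) (T s)) (vscal (tg s) (U s))) /\
    vderiv U s (vadd (vscal (- kn s) (T s)) (vscal (- tg s) (V s))).

Definition regular_on (a b : Rbar) (g : R -> vec) : Prop :=
  forall s, in_I a b s -> exists v, vderiv g s v /\ v <> vzero.

Definition general_helix (a b : Rbar) (g : R -> vec) : Prop :=
  exists d : vec, vnorm d = 1 /\ exists c : R, forall s, in_I a b s ->
    dot (vscal (/ vnorm (vDerive g s)) (vDerive g s)) d = c.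

Definition helical_curve (a b : Rbar) (T : R -> vec) : Prop :=
  exists d : vec, vnorm d = 1 /\ exists c : R, forall s, in_I a b s -> dot (T s) d = c.

(** The companion curve has velocity [gamma' = lambda T], where
    [lambda = 1 - c2 e^chi (kg (1 + (tg/kn)^2) + (tg/kn)')]: the choice
    [chi' = kg tg / kn] makes the [V]-component vanish, and the [U]-components
    of [(tg/kn) T'] and [-V'] cancel.  Regularity of [gamma] forces [lambda <> 0];
    being continuous on an interval, [lambda] has constant sign, so the unit
    tangent of [gamma] is [T] or [-T] throughout, and [<gamma'/|gamma'|, d>] is
    constant exactly when [<T, d>] is. *)

From Stdlib Require Import Reals Lra Classical.
From Coquelicot Require Import Coquelicot.
Open Scope R_scope.

Lemma vec_eta (v : vec) : v = (vx v, vy v, vz v).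
Proof. destruct v as [[x y] z]; reflexivity. Qed.

Lemma vscal0_l (u : vec) : vscal 0 u = vzero.
Proof. unfold vscal, vzero; f_equal; [f_equal|]; ring. Qed.

Lemma dot_scal_l (r : R) (u v : vec) : dot (vscal r u) v = r * dot u v.
Proof. unfold dot, vscal, vx, vy, vz; simpl; ring. Qed.

Lemma dot_scal_r (r : R) (u v : vec) : dot u (vscal r v) = r * dot u v.
Proof. unfold dot, vscal, vx, vy, vz; simpl; ring. Qed.

Lemma vnorm_scal_unit (r : R) (u : vec) :
  dot u u = 1 -> vnorm (vscal r u) = Rabs r.
Proof.
  intros Hu; unfold vnorm.
  rewrite dot_scal_l, dot_scal_r, Hu, Rmult_1_r.
  apply sqrt_Rsqr_abs.
Qed.

Lemma vderiv_vDerive (f : R -> vec) (s : R) (v : vec) :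
  vderiv f s v -> vDerive f s = v.
Proof.
  intros (Dx & Dy & Dz).
  rewrite (vec_eta v); unfold vDerive.
  f_equal; [f_equal|]; apply is_derive_unique; assumption.
Qed.

Lemma regular_on_vderiv_neq0 (a b : Rbar) (g : R -> vec) (s : R) (w : vec) :
  regular_on a b g -> in_I a b s -> vderiv g s w -> w <> vzero.
Proof.
  intros Hreg Hs Hw.
  destruct (Hreg s Hs) as [v [Hv Hv0]].
  now rewrite <- (vderiv_vDerive _ _ _ Hw), (vderiv_vDerive _ _ _ Hv).
Qed.

Definition unit_tangent (g : R -> vec) (s : R) : vec :=
  vscal (/ vnorm (vDerive g s)) (vDerive g s).

Lemma dot_unit_tangent_scal (g : R -> vec) (s r : R) (u d : vec) :
  dot u u = 1 -> vDerive g s = vscal r u ->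
  dot (unit_tangent g s) d = r / Rabs r * dot u d.
Proof.
  intros Hu Hg; unfold unit_tangent.
  rewrite Hg, vnorm_scal_unit by exact Hu.
  rewrite !dot_scal_l; unfold Rdiv; ring.
Qed.

Lemma general_helix_iff_helical_curve (a b : Rbar) (g T : R -> vec) (e : R) :
  e <> 0 ->
  (forall s d, in_I a b s -> dot (unit_tangent g s) d = e * dot (T s) d) ->
  general_helix a b g <-> helical_curve a b T.
Proof.
  intros He Hg; split.
  - intros [d [Hd [c Hc]]].
    exists d; split; [exact Hd|]; exists (c / e); intros s Hs.
    rewrite <- (Hc s Hs); fold (unit_tangent g s); rewrite Hg by exact Hs.
    field; exact He.
  - intros [d [Hd [c Hc]]].
    exists d; split; [exact Hd|]; exists (e * c); intros s Hs.
    fold (unit_tangent g s); now rewrite Hg, Hc.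
Qed.

Lemma in_I_between (a b : Rbar) (x y z : R) :
  in_I a b x -> in_I a b y -> x <= z <= y -> in_I a b z.
Proof. unfold in_I; destruct a, b; simpl; intros; lra. Qed.

Section ConstantSign.

Variables (a b : Rbar) (f : R -> R).
Hypothesis f_cont : forall s, in_I a b s -> continuity_pt f s.
Hypothesis f_neq0 : forall s, in_I a b s -> f s <> 0.

Lemma continuous_nonvanishing_pos (s0 s : R) :
  in_I a b s0 -> in_I a b s -> 0 < f s0 -> 0 < f s.
Proof.
  intros Hs0 Hs Hpos.
  destruct (Rlt_or_le 0 (f s)) as [|Hle]; [assumption|exfalso].
  assert (Hneg : f s < 0) by (destruct Hle; [assumption|now elim (f_neq0 s Hs)]).
  destruct (Rtotal_order s s0) as [Hlt|[Heq|Hgt]].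
  - destruct (Ranalysis5.IVT_interv f s s0) as [z [Hz Hfz]]; try assumption.
    + intros x Hx; apply f_cont, (in_I_between a b s s0); assumption.
    + exact (f_neq0 z (in_I_between a b s s0 z Hs Hs0 Hz) Hfz).
  - subst; lra.
  - destruct (Ranalysis5.IVT_interv (fun t => - f t) s0 s) as [z [Hz Hfz]]; try lra.
    + intros x Hx; apply continuity_pt_opp, f_cont, (in_I_between a b s0 s); assumption.
    + apply (f_neq0 z (in_I_between a b s0 s z Hs0 Hs Hz)); lra.
Qed.

Lemma continuous_nonvanishing_sign_constant :
  exists e, (e = 1 \/ e = -1) /\ forall s, in_I a b s -> f s / Rabs (f s) = e.
Proof.
  destruct (classic (exists s0, in_I a b s0 /\ 0 < f s0)) as [[s0 [Hs0 Hpos]]|Hnone].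
  - exists 1; split; [now left|]; intros s Hs.
    pose proof (continuous_nonvanishing_pos s0 s Hs0 Hs Hpos).
    rewrite Rabs_right by lra; field; lra.
  - exists (-1); split; [now right|]; intros s Hs.
    assert (Hneg : f s < 0).
    { destruct (Rtotal_order (f s) 0) as [|[Heq|Hgt]]; [assumption| |].
      - now elim (f_neq0 s Hs).
      - elim Hnone; now exists s. }
    rewrite Rabs_left by exact Hneg; field; lra.
Qed.

End ConstantSign.

Definition companion (alpha T V : R -> vec) (kn tg chi : R -> R) (c2 s : R) : vec :=
  vsub (alpha s) (vscal (c2 * exp (chi s)) (vsub (vscal (tg s / kn s) (T s)) (V s))).

Definition companion_speed (kg kn tg chi : R -> R) (c2 s : R) : R :=
  1 - c2 * exp (chi s) * (kg s * (1 + (tg s / kn s) * (tg s / kn s))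
     + (Derive tg s * kn s - tg s * Derive kn s) / (kn s * kn s)).

(* The coordinate is written with [+ -1 *] as produced by [vsub] and [vscal]. *)
Lemma is_derive_companion_coord (A Tc Vc Uc kg kn tg chi : R -> R) (c2 s : R) :
  kn s <> 0 -> ex_derive kn s -> ex_derive tg s ->
  is_derive chi s (kg s * tg s / kn s) ->
  is_derive A s (Tc s) ->
  is_derive Tc s (kg s * Vc s + kn s * Uc s) ->
  is_derive Vc s (- kg s * Tc s + tg s * Uc s) ->
  is_derive (fun t => A t + -1 * (c2 * exp (chi t) * (tg t / kn t * Tc t + -1 * Vc t))) s
    (companion_speed kg kn tg chi c2 s * Tc s).
Proof.
  intros Hkn Dkn Dtg Dchi DA DT DV.
  auto_derive.
  - repeat split; try assumption; eexists; eassumption.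
  - erewrite (is_derive_unique (fun x => A x)), (is_derive_unique (fun x => chi x)),
      (is_derive_unique (fun x => Tc x)), (is_derive_unique (fun x => Vc x)) by eassumption.
    change (fun x => tg x) with tg; change (fun x => kn x) with kn.
    unfold companion_speed; field; exact Hkn.
Qed.

Lemma vderiv_companion (a b : Rbar) (alpha T V U : R -> vec) (kg kn tg chi : R -> R)
    (c2 s : R) :
  darboux_frame a b alpha T V U kg kn tg -> in_I a b s ->
  kn s <> 0 -> ex_derive kn s -> ex_derive tg s ->
  is_derive chi s (kg s * tg s / kn s) ->
  vderiv (companion alpha T V kn tg chi c2) s
    (vscal (companion_speed kg kn tg chi c2 s) (T s)).
Proof.
  intros Hframe Hs Hkn Dkn Dtg Dchi.
  destruct (Hframe s Hs) as ((Ax & Ay & Az) & _ & _ & _ & _ & (Tx & Ty & Tz) & (Vx & Vy & Vz) & _).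
  pose proof (fun p : vec -> R =>
    is_derive_companion_coord (fun t => p (alpha t)) (fun t => p (T t))
      (fun t => p (V t)) (fun t => p (U t)) kg kn tg chi c2 s Hkn Dkn Dtg Dchi) as Hcoord.
  unfold vderiv, companion; cbn [vx vy vz vsub vadd vscal fst snd] in *.
  split; [|split].
  - exact (Hcoord vx Ax Tx Vx).
  - exact (Hcoord vy Ay Ty Vy).
  - exact (Hcoord vz Az Tz Vz).
Qed.

Lemma continuity_pt_companion_speed (a b : Rbar) (kg kn tg chi : R -> R) (c2 s : R) :
  C1_on a b kg -> C1_on a b kn -> C1_on a b tg -> in_I a b s ->
  kn s <> 0 -> ex_derive chi s ->
  continuity_pt (companion_speed kg kn tg chi c2) s.
Proof.
  intros Cg Cn Ct Hs Hkn Dchi.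
  assert (Hcont : forall f : R -> R, ex_derive f s -> continuity_pt f s).
  { intros f Df; apply continuity_pt_filterlim; exact (ex_derive_continuous f s Df). }
  destruct (Cg s Hs) as [Dkg _], (Cn s Hs) as [Dkn Cdkn], (Ct s Hs) as [Dtg Cdtg].
  apply continuity_pt_filterlim in Cdkn, Cdtg.
  pose proof (Hcont _ Dkg) as Ckg; pose proof (Hcont _ Dkn) as Ckn;
    pose proof (Hcont _ Dtg) as Ctg; pose proof (Hcont _ Dchi) as Cchi.
  unfold companion_speed; reg.
  now apply Rmult_integral_contrapositive.
Qed.

Theorem theorem3p9 (a b : Rbar) (alpha T V U : R -> vec) (kg kn tg chi : R -> R) (c2 : R) :
  Rbar_lt a b ->
  darboux_frame a b alpha T V U kg kn tg ->
  C1_on a b kg -> C1_on a b kn -> C1_on a b tg ->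
  (forall s, in_I a b s -> kn s <> 0) ->
  c2 <> 0 ->
  (forall s, in_I a b s -> is_derive chi s (kg s * tg s / kn s)) ->
  regular_on a b (fun s => vsub (alpha s)
      (vscal (c2 * exp (chi s)) (vsub (vscal (tg s / kn s) (T s)) (V s)))) ->
  (general_helix a b (fun s => vsub (alpha s)
      (vscal (c2 * exp (chi s)) (vsub (vscal (tg s / kn s) (T s)) (V s))))
   <-> helical_curve a b T).
Proof.
  intros _ Hframe Ckg Ckn Ctg Hkn _ Dchi Hreg.
  change (fun s => vsub (alpha s) _) with (companion alpha T V kn tg chi c2) in *.
  set (lam := companion_speed kg kn tg chi c2).
  assert (Dgamma : forall s, in_I a b s ->
    vderiv (companion alpha T V kn tg chi c2) s (vscal (lam s) (T s))).
  { intros s Hs; apply (vderiv_companion a b alpha T V U); auto.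
    - apply (Ckn s Hs).
    - apply (Ctg s Hs). }
  assert (Hlam : forall s, in_I a b s -> lam s <> 0).
  { intros s Hs Hzero; apply (regular_on_vderiv_neq0 _ _ _ _ _ Hreg Hs (Dgamma s Hs)).
    rewrite Hzero; apply vscal0_l. }
  destruct (continuous_nonvanishing_sign_constant a b lam) as [e [He Hsign]];
    [| exact Hlam |].
  { intros s Hs; apply (continuity_pt_companion_speed a b); auto.
    eexists; exact (Dchi s Hs). }
  apply (general_helix_iff_helical_curve a b _ _ e); [lra|].
  intros s d Hs; rewrite <- (Hsign s Hs).
  apply dot_unit_tangent_scal; [apply (Hframe s Hs) | apply vderiv_vDerive, Dgamma, Hs].
Qed.
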